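(* For all $a_0,a_1,a_2,a_3\in\mathcal{A}(\mathbb{CP}^1_q)$, $$\int_h a_0\,(\partial a_1\,\bar\partial a_2)\,a_3=\int_h \sigma(a_3)\,a_0\,\partial a_1\,\bar\partial a_2 .$$
   Context: Fix $0<q<1$. Let $\mathcal{A}(SU_q(2))$ be the unital complex $*$-algebra generated by $a,c$ subject to $ac=qca$, $ac^*=qc^*a$, $cc^*=c^*c$, $a^*a+c^*c=aa^*+q^2cc^*=1$, a Hopf $*$-algebra with $\Delta a=a\otimes a-qc^*\otimes c$, $\Delta c=c\otimes a+a^*\otimes c$. Let $U_q(su(2))$ be the Hopf algebra generated by $K,K^{-1},E,F$ with $KK^{-1}=K^{-1}K=1$, $KE=qEK$, $KF=q^{-1}FK$, $EF-FE=(K^2-K^{-2})/(q-q^{-1})$, $\Delta K=K\otimes K$, $\Delta E=E\otimes K+K^{-1}\otimes E$, $\Delta F=F\otimes K+K^{-1}\otimes F$, $\epsilon(K)=1,\epsilon(E)=\epsilon(F)=0$, acting on $\mathcal{A}(SU_q(2))$ as a left module algebra with $K\triangleright a=q^{-1/2}a$, $K\triangleright c=q^{-1/2}c$, $K\triangleright a^*=q^{1/2}a^*$, $K\triangleright c^*=q^{1/2}c^*$, $E\triangleright a=-qc^*$, $E\triangleright c=a^*$, $E\triangleright a^*=E\triangleright c^*=0$, $F\triangleright a=F\triangleright c=0$, $F\triangleright a^*=c$, $F\triangleright c^*=-q^{-1}a$. Put $X_-=q^{-1/2}FK$, $X_+=q^{1/2}EK$. Let $\mathcal{L}_k=\{x:K\triangleright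 x=q^{k/2}x\}$ and $\mathcal{A}(\mathbb{CP}^1_q):=\mathcal{L}_0$. Forms: $\Omega^1(SU_q(2))$ is the bimodule free as a left module on $\omega_+,\omega_-,\omega_z$ with $\omega_\pm x=q^kx\omega_\pm$, $\omega_zx=q^{2k}x\omega_z$ for $x\in\mathcal{L}_k$; products of 1-forms are taken in the exterior algebra where $\omega_\pm\wedge\omega_\pm=0$ and $\omega_+\wedge\omega_-=-q^2\omega_-\wedge\omega_+$. For $f\in\mathcal{A}(\mathbb{CP}^1_q)$: $\partial f=(X_+\triangleright f)\omega_+$, $\bar\partial f=(X_-\triangleright f)\omega_-$. $\Omega^2(\mathbb{CP}^1_q):=\mathcal{A}(\mathbb{CP}^1_q)\,\omega_-\wedge\omega_+$. Let $h$ be the Haar state: the linear functional on $\mathcal{A}(SU_q(2))$ with $h(1)=1$ and $(\mathrm{id}\otimes h)\Delta(x)=h(x)1$ (faithful and positive). Its modular automorphism $\sigma$ is the unique algebra automorphism of $\mathcal{A}(SU_q(2))$ with $h(xy)=h(\sigma(y)x)$ for all $x,y$; it maps $\mathcal{A}(\mathbb{CP}^1_q)$ to itself. Define $\int_h:\Omega^2(\mathbb{CP}^1_q)\to\mathbb{C}$ by $\int_h x\,\omega_-\wedge\omega_+=h(x)$. *)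

From mathcomp Require Import all_boot all_order all_algebra complex.
From mathcomp Require Import reals.
Set Implicit Arguments. Unset Strict Implicit. Unset Printing Implicit Defensive.
Import Order.TTheory GRing.Theory Num.Theory.
Local Open Scope ring_scope.
Local Open Scope complex_scope.

(* Scalars: C := R[i] (complex numbers over a real field R : realType).
   The algebra A(SU_q(2)) is an algebra A : algType R[i] together with
   elements a, c and the involution st (the * operation). *)

Inductive gen := Ga | Gas | Gc | Gcs.

Definition gval (R : realType) (A : algType R[i]) (a c : A) (st : A -> A)
  (g : gen) : A :=
  match g with Ga => a | Gas => st a | Gc => c | Gcs => st c end.

Definition ev_word (R : realType) (A : algType R[i]) (a c : A) (st : A -> A)
  (w : seq gen) : A := foldr (fun g acc => gval a c st g * acc) 1 w.

(* PBW monomial a^k c^m c*^n, where a^k := (a^* )^(-k) for k < 0 *)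
Definition pbw (R : realType) (A : algType R[i]) (a c : A) (st : A -> A)
  (t : int * nat * nat) : A :=
  let: (k, m, n) := t in
  (if (0 <= k)%R then a ^+ `|k|%N else (st a) ^+ `|k|%N) * c ^+ m * (st c) ^+ n.

(* An element of A (x) A is represented as a finite list of simple tensors
   (x, y) standing for  sum x (x) y. *)
Definition tprod (R : realType) (A : algType R[i]) (s t : seq (A * A)) :
  seq (A * A) := [seq (u.1 * v.1, u.2 * v.2) | u <- s, v <- t].

Definition cop_gen (R : realType) (q : R) (A : algType R[i]) (a c : A)
  (st : A -> A) (g : gen) : seq (A * A) :=
  match g with
  | Ga => [:: (a, a); (- (q%:C) *: st c, c)]
  | Gc => [:: (c, a); (st a, c)]
  | Gas => [:: (st a, st a); (- (q%:C) *: c, st c)]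
  | Gcs => [:: (st c, st a); (a, st c)]
  end.

(* coproduct of a word (Delta is an algebra map) *)
Definition cop_word (R : realType) (q : R) (A : algType R[i]) (a c : A)
  (st : A -> A) (w : seq gen) : seq (A * A) :=
  foldr (fun g acc => tprod (cop_gen q a c st g) acc) [:: (1, 1)] w.

Definition id_tensor_h (R : realType) (A : algType R[i]) (h : A -> R[i])
  (s : seq (A * A)) : A := \sum_(p <- s) h p.2 *: p.1.

(* The map x |-> q^k x on L_k (extended linearly) is x |-> K^2 |> x;
   so omega_{+-} x = (K^2 |> x) omega_{+-}. *)
Definition Kw (R : realType) (A : algType R[i]) (K : A -> A) (x : A) : A :=
  K (K x).

(* 1-forms in the sub-bimodule spanned by omega_+, omega_- :
   (f, g) stands for f omega_+ + g omega_-. *)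
Definition form1 (R : realType) (A : algType R[i]) := (A * A)%type.

(* 2-forms spanned by products of omega_+, omega_- :
   f stands for f omega_- /\ omega_+ . *)
Definition form2 (R : realType) (A : algType R[i]) := A.

(* (f+ w+ + f- w-) /\ (g+ w+ + g- w-)
   = f+ (K^2 g-) w+/\w- + f- (K^2 g+) w-/\w+
   = (f- (K^2 g+) - q^2 f+ (K^2 g-)) w-/\w+ *)
Definition wedge (R : realType) (q : R) (A : algType R[i]) (K : A -> A)
  (u v : form1 A) : form2 A :=
  u.2 * Kw K v.1 - (q ^+ 2)%:C *: (u.1 * Kw K v.2).

(* left and right module structure on 2-forms:
   x . (f w-/\w+) = (x f) w-/\w+ ;
   (f w-/\w+) . x = f (K^4 |> x) w-/\w+  *)
Definition f2_mull (R : realType) (A : algType R[i]) (x : A) (f : form2 A)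
  : form2 A := x * f.
Definition f2_mulr (R : realType) (A : algType R[i]) (K : A -> A)
  (f : form2 A) (x : A) : form2 A := f * Kw K (Kw K x).

Definition Xplus (R : realType) (q : R) (A : algType R[i]) (E K : A -> A)
  (x : A) : A := (Num.sqrt q)%:C *: E (K x).
Definition Xminus (R : realType) (q : R) (A : algType R[i]) (F K : A -> A)
  (x : A) : A := ((Num.sqrt q)%:C)^-1 *: F (K x).

Definition del (R : realType) (q : R) (A : algType R[i]) (E K : A -> A)
  (f : A) : form1 A := (Xplus q E K f, 0).
Definition delbar (R : realType) (q : R) (A : algType R[i]) (F K : A -> A)
  (f : A) : form1 A := (0, Xminus q F K f).

Definition int_h (R : realType) (A : algType R[i]) (h : A -> R[i])
  (f : form2 A) : R[i] := h f.

From mathcomp Require Import all_boot all_order all_algebra complex.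
From mathcomp Require Import reals.
Set Implicit Arguments. Unset Strict Implicit. Unset Printing Implicit Defensive.
Import Order.TTheory GRing.Theory Num.Theory.
Local Open Scope ring_scope.
Local Open Scope complex_scope.

(* The 2-form w_- /\ w_+ commutes with every element of degree 0, so on
   A(CP^1_q) the right action on 2-forms is plain multiplication and the
   identity is the twisted trace property h(x y) = h(sigma(y) x). *)

Section TwoForms.

Variables (R : realType) (A : algType R[i]) (K : A -> A).

Lemma Kw_fixed (x : A) : K x = x -> Kw K x = x.
Proof. by move=> Kx; rewrite /Kw !Kx. Qed.

Lemma f2_mulr_fixed (f : form2 A) (x : A) : K x = x -> f2_mulr K f x = f * x.
Proof. by move=> Kx; rewrite /f2_mulr !Kw_fixed. Qed.

Lemma int_h_twisted_trace (h : A -> R[i]) (sigma : A -> A)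
    (sig_mod : forall x y, h (x * y) = h (sigma y * x)) (x y : A) (f : form2 A) :
  int_h h (f2_mull x (f * y)) = int_h h (f2_mull (sigma y * x) f).
Proof. by rewrite /int_h /f2_mull mulrA sig_mod mulrA. Qed.

End TwoForms.

Theorem lemma5p3 (R : realType) (q : R) (A : algType R[i])
  (a c : A) (st : A -> A) (K Ki E F : A -> A) (h : A -> R[i]) (sigma : A -> A)
  (* 0 < q < 1 *)
  (hq0 : 0 < q) (hq1 : q < 1)
  (* st is a conjugate-linear involutive anti-multiplicative map ( * ) *)
  (stD : forall x y, st (x + y) = st x + st y)
  (stZ : forall (k : R[i]) x, st (k *: x) = k^* *: st x)
  (stM : forall x y, st (x * y) = st y * st x)
  (stK : forall x, st (st x) = x)
  (* defining relations of A(SU_q(2)) *)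
  (r1 : a * c = q%:C *: (c * a))
  (r2 : a * st c = q%:C *: (st c * a))
  (r3 : c * st c = st c * c)
  (r4 : st a * a + st c * c = 1)
  (r5 : a * st a + (q ^+ 2)%:C *: (c * st c) = 1)
  (* A is generated by a, a^*, c, c^* ... *)
  (gen_span : forall x : A, exists s : seq (R[i] * seq gen),
      x = \sum_(p <- s) p.1 *: ev_word a c st p.2)
  (* ... and the PBW monomials a^k c^m c^*^n are linearly independent,
     so A is (isomorphic to) A(SU_q(2)) *)
  (pbw_free : forall (s : seq (int * nat * nat)) (f : int * nat * nat -> R[i]),
      uniq s -> \sum_(t <- s) f t *: pbw a c st t = 0 ->
      forall t, t \in s -> f t = 0)
  (* left U_q(su(2))-module algebra structure *)
  (KL : forall (k : R[i]) x y, K (k *: x + y) = k *: K x + K y)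
  (KiL : forall (k : R[i]) x y, Ki (k *: x + y) = k *: Ki x + Ki y)
  (EL : forall (k : R[i]) x y, E (k *: x + y) = k *: E x + E y)
  (FL : forall (k : R[i]) x y, F (k *: x + y) = k *: F x + F y)
  (KKi : forall x, K (Ki x) = x) (KiK : forall x, Ki (K x) = x)
  (KE : forall x, K (E x) = q%:C *: E (K x))
  (KF : forall x, K (F x) = (q%:C)^-1 *: F (K x))
  (EF : forall x, E (F x) - F (E x)
          = ((q - q^-1)%:C)^-1 *: (K (K x) - Ki (Ki x)))
  (K1 : K 1 = 1) (Ki1 : Ki 1 = 1) (E1 : E 1 = 0) (F1 : F 1 = 0)
  (KM : forall x y, K (x * y) = K x * K y)
  (KiM : forall x y, Ki (x * y) = Ki x * Ki y)
  (EM : forall x y, E (x * y) = E x * K y + Ki x * E y)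
  (FM : forall x y, F (x * y) = F x * K y + Ki x * F y)
  (Ka : K a = ((Num.sqrt q)%:C)^-1 *: a)
  (Kc : K c = ((Num.sqrt q)%:C)^-1 *: c)
  (Kas : K (st a) = (Num.sqrt q)%:C *: st a)
  (Kcs : K (st c) = (Num.sqrt q)%:C *: st c)
  (Ea : E a = - q%:C *: st c) (Ec : E c = st a)
  (Eas : E (st a) = 0) (Ecs : E (st c) = 0)
  (Fa : F a = 0) (Fc : F c = 0)
  (Fas : F (st a) = c) (Fcs : F (st c) = - (q%:C)^-1 *: a)
  (* h is the Haar state *)
  (hL : forall (k : R[i]) x y, h (k *: x + y) = k * h x + h y)
  (h1 : h 1 = 1)
  (h_inv : forall w : seq gen,
      id_tensor_h h (cop_word q a c st w) = h (ev_word a c st w) *: 1)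
  (* sigma is the modular automorphism of h *)
  (sigL : forall (k : R[i]) x y, sigma (k *: x + y) = k *: sigma x + sigma y)
  (sigM : forall x y, sigma (x * y) = sigma x * sigma y)
  (sig1 : sigma 1 = 1)
  (sig_bij : bijective sigma)
  (sig_mod : forall x y, h (x * y) = h (sigma y * x))
  (* a0, ..., a3 in A(CP^1_q) = L_0 *)
  (a0 a1 a2 a3 : A)
  (ha0 : K a0 = a0) (ha1 : K a1 = a1) (ha2 : K a2 = a2) (ha3 : K a3 = a3) :
  int_h h (f2_mull a0
             (f2_mulr K (wedge q K (del q E K a1) (delbar q F K a2)) a3))
  = int_h h (f2_mull (sigma a3 * a0)
             (wedge q K (del q E K a1) (delbar q F K a2))).
Proof.
by rewrite (f2_mulr_fixed _ ha3) (int_h_twisted_trace sig_mod).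
Qed.
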